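(* Let $\Gamma=(G,\sigma)$, $G=(V,E)$, be a signed graph and $f:V\to\mathbb R$ a function not identically zero, with weak nodal domains $D_1,\dots,D_q$. Let $G_D$ be the graph with vertex set $\{D_1,\dots,D_q\}$ and edges $\{D_i,D_j\}$ whenever $D_i\sim D_j$, i.e. there exist $x\in D_i$ and $y\in D_j$ with $x\sim y$. If $G$ is connected, then $G_D$ is connected.
   Context: A signed graph is a finite simple undirected graph $G=(V,E)$ with $\sigma:E\to\{+1,-1\}$. A walk is $y_1,\dots,y_m$ ($m\ge2$) with consecutive vertices adjacent. For $f:V\to\mathbb R$, a W-walk of $f$ is a walk such that for any two consecutive nonzeros $y_i,y_j$ along it ($i<j$, $f(y_i)\ne0\ne f(y_j)$, $f(y_l)=0$ for $i<l<j$) one has $f(y_i)\sigma_{y_iy_{i+1}}\cdots\sigma_{y_{j-1}y_j}f(y_j)>0$. On $\Omega=\{x:f(x)\ne0\}$ the relation ''$x=y$ or a W-walk connects $x$ and $y$'' is an equivalence relation with classes $W_1,\dots,W_q$; the weak nodal domains of $f$ are the induced subgraphs on $W_i^0=W_i\cup\{x\in V:\text{there is a W-walk from } x \text{ to some vertex of } W_i\}$. *)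

From mathcomp Require Import all_boot all_order all_algebra.
From Stdlib Require Relation_Operators.
Set Implicit Arguments. Unset Strict Implicit. Unset Printing Implicit Defensive.
Import Order.TTheory GRing.Theory Num.Theory.
Local Open Scope ring_scope.

Definition signed_graph (T : finType) (R : realFieldType)
  (adj : rel T) (sigma : T -> T -> R) : Prop :=
  symmetric adj /\ irreflexive adj /\
  (forall x y, adj x y -> sigma x y = sigma y x) /\
  (forall x y, adj x y -> sigma x y = 1 \/ sigma x y = -1).

Section WalkDefs.
Variables (T : finType) (R : realFieldType) (adj : rel T) (sigma : T -> T -> R)
  (f : T -> R).

(* The walk y_1, ..., y_m (m >= 2) is represented as x :: p with p nonempty. *)
Definition is_walk (x : T) (p : seq T) : bool := (p != [::]) && path adj x p.

Definition W_cond (x : T) (p : seq T) : Prop :=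
  let s := x :: p in
  forall i j, (i < j)%N -> (j < size s)%N ->
    f (nth x s i) != 0 -> f (nth x s j) != 0 ->
    (forall l, (i < l)%N -> (l < j)%N -> f (nth x s l) = 0) ->
    0 < f (nth x s i) * (\prod_(i <= l < j) sigma (nth x s l) (nth x s l.+1))
          * f (nth x s j).

Definition Wwalk (x y : T) : Prop :=
  exists p : seq T, [/\ is_walk x p, W_cond x p & last x p = y].

(* The class W(w) of w in Omega = {f <> 0} w.r.t. the relation
   "x = y or a W-walk connects x and y". *)
Definition Wclass (w x : T) : Prop := f x != 0 /\ (w = x \/ Wwalk w x).

Definition nodal_domain (w x : T) : Prop :=
  Wclass w x \/ exists y, Wclass w y /\ Wwalk x y.

Definition domain_adj (w w' : T) : Prop :=
  f w != 0 /\ f w' != 0 /\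
  exists x y, [/\ nodal_domain w x, nodal_domain w' y & adj x y].

End WalkDefs.

(** Every vertex lies in some weak nodal domain: a nonzero vertex lies in its
    own, and a zero vertex x is joined by a walk through zeros to the first
    nonzero vertex y on a path of G, which is a W-walk vacuously, so x lies in
    the domain of y.  Attaching to each vertex such a domain (the vertex's own
    when it is nonzero), adjacent vertices give adjacent domains, so a path of
    G from w to w' yields a path of G_D from the domain of w to that of w'.
    The signs never enter, since the only W-walks used run through zeros. *)

From mathcomp Require Import all_boot all_order all_algebra.
From Stdlib Require Relation_Operators.

Set Implicit Arguments.
Unset Strict Implicit.
Unset Printing Implicit Defensive.
Import Order.TTheory GRing.Theory Num.Theory.
Local Open Scope ring_scope.

Lemma connect_invariant (T : finType) (e : rel T) (P : T -> Prop) :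
  (forall x y, e x y -> P x -> P y) -> forall x y, connect e x y -> P x -> P y.
Proof.
move=> stepP x y /connectP[p + ->] {y}.
by elim: p x => [|y p IHp] x //= /andP[exy /IHp] Py Px; apply/Py/(stepP x).
Qed.

Section WeakNodalDomains.

Variables (T : finType) (R : realFieldType) (adj : rel T) (sigma : T -> T -> R)
  (f : T -> R).

Lemma W_cond_zero_prefix (x : T) (q : seq T) :
  (forall i, (i < size q)%N -> f (nth x (x :: q) i) = 0) -> W_cond sigma f x q.
Proof.
rewrite /W_cond /= => zero_q i j lt_ij lt_j_sq /eqP[]; apply: zero_q.
exact: leq_trans lt_ij lt_j_sq.
Qed.

Lemma path_zero_prefix (x : T) (p : seq T) :
  path adj x p -> f x = 0 -> f (last x p) != 0 ->
  exists q, [/\ is_walk adj x q,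
    forall i, (i < size q)%N -> f (nth x (x :: q) i) = 0 & f (last x q) != 0].
Proof.
elim: p x => [|y p IHp] x /=; first by move=> _ ->; rewrite eqxx.
case/andP=> adj_xy path_yp fx0 f_last.
have [fy0 | fy_neq0] := eqVneq (f y) 0; last first.
  by exists [:: y]; split=> //; [rewrite /is_walk /= adj_xy | case].
have [q [/andP[_ walk_yq] zero_q f_last_q]] := IHp y path_yp fy0 f_last.
exists (y :: q); split=> //; first by rewrite /is_walk /= adj_xy.
case=> [|i] //= lt_i_sq.
by rewrite (set_nth_default y) ?zero_q // ltnS ltnW.
Qed.

Lemma Wwalk_to_nonzero (x : T) (p : seq T) :
  path adj x p -> f x = 0 -> f (last x p) != 0 ->
  exists2 y, f y != 0 & Wwalk adj sigma f x y.
Proof.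
move=> path_xp fx0 f_last.
have [q [walk_q zero_q f_last_q]] := path_zero_prefix path_xp fx0 f_last.
by exists (last x q) => //; exists q; split=> //; apply: W_cond_zero_prefix.
Qed.

Definition domain_rep (r x : T) : Prop :=
  [/\ f r != 0, nodal_domain adj sigma f r x & (f x != 0 -> r = x)].

Lemma domain_rep_self (x : T) : f x != 0 -> domain_rep x x.
Proof. by move=> fx_neq0; split=> //; left; split=> //; left. Qed.

Lemma domain_rep_exists (x z : T) :
  connect adj x z -> f z != 0 -> exists r, domain_rep r x.
Proof.
move=> /connectP[p path_xp ->] f_last.
have [fx0 | /domain_rep_self] := eqVneq (f x) 0; last by exists x.
have [y fy_neq0 Wwalk_xy] := Wwalk_to_nonzero path_xp fx0 f_last.
exists y; split=> [||/eqP] //.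
by right; exists y; split=> //; split=> //; left.
Qed.

Lemma domain_adj_rep (x y rx ry : T) :
  adj x y -> domain_rep rx x -> domain_rep ry y -> domain_adj adj sigma f rx ry.
Proof. by move=> adj_xy [frx ndx _] [fry ndy _]; do 2!split=> //; exists x, y. Qed.

End WeakNodalDomains.

Theorem proposition3p7 (T : finType) (R : realFieldType)
  (adj : rel T) (sigma : T -> T -> R) (f : T -> R) :
  signed_graph adj sigma ->
  (exists x, f x != 0) ->
  (forall x y : T, connect adj x y) ->
  forall w w' : T, f w != 0 -> f w' != 0 ->
    Relation_Operators.clos_refl_trans T (domain_adj adj sigma f) w w'.
Proof.
move=> _ _ connected w w' fw_neq0 fw'_neq0.
pose reached x := exists2 r, domain_rep adj sigma f r x &
  Relation_Operators.clos_refl_trans T (domain_adj adj sigma f) w r.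
have reached_adj x y : adj x y -> reached x -> reached y.
  move=> adj_xy [rx rep_x w_rx].
  have [ry rep_y] := domain_rep_exists sigma (connected y w) fw_neq0.
  exists ry => //; apply: Relation_Operators.rt_trans w_rx _.
  exact/Relation_Operators.rt_step/(domain_adj_rep adj_xy rep_x rep_y).
have reached_w : reached w.
  by exists w; [exact: domain_rep_self | exact: Relation_Operators.rt_refl].
by have [r [_ _ ->]] := connect_invariant reached_adj (connected w w') reached_w.
Qed.
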